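(* Let $\rho_1,\rho_2\in\mathbb{M}_2(\mathbb{C})$ be any two non-maximally mixed (NMM) thermal states. Then there exists $\Lambda\in SL(2,\mathbb{C})$ such that the action described below maps $\rho_1$ to $\rho_2$. Explicitly: writing $\rho_1=e^{-\beta H_1}/\mathrm{tr}(e^{-\beta H_1})$ and $\rho_2=e^{-\beta H_2}/\mathrm{tr}(e^{-\beta H_2})$ with a common $\beta>0$ and Hermitian $H_a$ having spectrum $\{0,\epsilon_a\}$, $\epsilon_a>0$, there is $\Lambda\in SL(2,\mathbb{C})$ with $$\rho_2=\frac{e^{-\beta(\Lambda H_1\Lambda^* )}}{\mathrm{tr}\big(e^{-\beta(\Lambda H_1\Lambda^* )}\big)}.$$
   Context: $\mathbb{M}_2(\mathbb{C})$ denotes the $2\times2$ complex matrices, $\Lambda^*$ the conjugate transpose, $\mathbb{1}_2$ the identity. A thermal state on $\mathbb{M}_2(\mathbb{C})$ is a density matrix of the Gibbs form $\rho=e^{-\beta H}/\mathrm{tr}(e^{-\beta H})$ with $\beta>0$ and $H$ Hermitian; it is non-maximally mixed (NMM) if $\rho\neq\frac12\mathbb{1}_2$. Every such $\rho$ can, for any prescribed $\beta>0$, be written in this form with a unique Hermitian $H$ whose spectrum is $\{0,\epsilon\}$ with $\epsilon>0$. The action of $\Lambda\in SL(2,\mathbb{C})$ on NMM thermal states is defined using this normalized $H$: $e^{-\beta H}/\mathrm{tr}(e^{-\beta H})\mapsto e^{-\beta(\Lambda H\Lambda^* )}/\mathrm{tr}(e^{-\beta(\Lambda H\Lambda^* )})$.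 *)

From HB Require Import structures.
From mathcomp Require Import all_boot all_order all_algebra.
From mathcomp Require Import all_classical all_reals all_analysis.
From mathcomp.real_closed Require Import complex.
Set Implicit Arguments. Unset Strict Implicit. Unset Printing Implicit Defensive.
Import Order.TTheory GRing.Theory Num.Theory.
Import numFieldNormedType.Exports.
Local Open Scope ring_scope.
Local Open Scope complex_scope.

Section Thermal.
Variable R : realType.
Local Notation C := (R[i]).

Definition adjmx (A : 'M[C]_2) : 'M[C]_2 := (map_mx (@conjc R) A)^T.

Definition herm_mx (A : 'M[C]_2) : Prop := adjmx A = A.

Definition exp_psum (A : 'M[C]_2) (n : nat) : 'M[C]_2 :=
  \sum_(k < n) (k`!%:R)^-1 *: A ^+ k.

Definition mexp (A : 'M[C]_2) : 'M[C]_2 :=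
  \matrix_(i < 2, j < 2)
    Complex (limn (fun n => @complex.Re R (exp_psum A n i j)))
            (limn (fun n => @complex.Im R (exp_psum A n i j))).

Definition gibbs (beta : R) (H : 'M[C]_2) : 'M[C]_2 :=
  (\tr (mexp (- (beta%:C) *: H)))^-1 *: mexp (- (beta%:C) *: H).

Definition thermal (rho : 'M[C]_2) : Prop :=
  exists (beta : R) (H : 'M[C]_2), 0 < beta /\ herm_mx H /\ rho = gibbs beta H.

Definition NMM (rho : 'M[C]_2) : Prop := rho <> (2%:R)^-1 *: 1%:M.

Definition spectrum_0_eps (A : 'M[C]_2) (eps : R) : Prop :=
  forall l : C, eigenvalue A l <-> (l = 0 \/ l = eps%:C).

Definition SL2 (L : 'M[C]_2) : Prop := \det L = 1.

End Thermal.

(* A Hermitian 2x2 matrix H with spectrum {0, eps}, eps > 0, has determinant 0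
   and trace eps, so it is positive semidefinite of rank one: H = v v^* for a
   nonzero v.  Completing v to a matrix M of determinant 1 with first column v
   gives H = M E11 M^*.  Hence H1 and H2 are both SL(2,C)-congruent to E11, and
   L = M2 M1^-1 satisfies L H1 L^* = H2, so the Gibbs states coincide. *)

From HB Require Import structures.
From mathcomp Require Import all_boot all_order all_algebra.
From mathcomp Require Import all_classical all_reals all_analysis.
From mathcomp.real_closed Require Import complex.
From mathcomp Require Import ring lra.
Import Order.TTheory GRing.Theory Num.Theory.
Set Implicit Arguments.
Unset Strict Implicit.
Unset Printing Implicit Defensive.
Local Open Scope ring_scope.
Local Open Scope complex_scope.

Section TwoByTwo.
Variable R : realType.
Local Notation C := R[i].

Definition mx2 (a b c d : C) : 'M[C]_2 :=
  \matrix_(i < 2, j < 2)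
    if i == 0 then (if j == 0 then a else b) else (if j == 0 then c else d).

Lemma mx2_eta (A : 'M[C]_2) : A = mx2 (A 0 0) (A 0 1) (A 1 0) (A 1 1).
Proof.
apply/matrixP => i j; rewrite !mxE.
case: i => [[|[|?]] ?] //; case: j => [[|[|?]] ?] //=.
all: by congr (A _ _); exact: val_inj.
Qed.

Lemma mx2_inj a b c d a' b' c' d' : mx2 a b c d = mx2 a' b' c' d' ->
  [/\ a = a', b = b', c = c' & d = d'].
Proof.
move=> E; have entry i j : mx2 a b c d i j = mx2 a' b' c' d' i j by rewrite E.
by move: (entry 0 0) (entry 0 1) (entry 1 0) (entry 1 1); rewrite !mxE.
Qed.

Lemma mulmx2 a b c d a' b' c' d' : mx2 a b c d *m mx2 a' b' c' d' =
  mx2 (a * a' + b * c') (a * b' + b * d') (c * a' + d * c') (c * b' + d * d').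
Proof.
apply/matrixP => i j; rewrite !mxE !big_ord_recl big_ord0 !mxE /=.
by case: i => [[|[|?]] ?] //; case: j => [[|[|?]] ?] //=; rewrite addr0.
Qed.

Lemma adjmx2 a b c d : adjmx (mx2 a b c d) = mx2 a^* c^* b^* d^*.
Proof.
apply/matrixP => i j; rewrite !mxE.
by case: i => [[|[|?]] ?] //; case: j => [[|[|?]] ?] //=.
Qed.

Lemma det_mx2 a b c d : \det (mx2 a b c d) = a * d - b * c.
Proof.
rewrite (expand_det_row _ 0) !big_ord_recl big_ord0 /cofactor !det_mx11 !mxE /=.
by rewrite addr0 !expr0 !mul1r expr1 mulN1r mulrN.
Qed.

Lemma scalar_mx2 l : l%:M = mx2 l 0 0 l.
Proof.
apply/matrixP => i j; rewrite !mxE.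
by case: i => [[|[|?]] ?] //; case: j => [[|[|?]] ?] //=.
Qed.

Lemma submx2 a b c d a' b' c' d' : mx2 a b c d - mx2 a' b' c' d' =
  mx2 (a - a') (b - b') (c - c') (d - d').
Proof.
apply/matrixP => i j; rewrite !mxE.
by case: i => [[|[|?]] ?] //; case: j => [[|[|?]] ?] //=.
Qed.

Lemma adjmxM (A B : 'M[C]_2) : adjmx (A *m B) = adjmx B *m adjmx A.
Proof. by rewrite /adjmx map_mxM trmx_mul. Qed.

Lemma adjmx1 : adjmx (1%:M : 'M[C]_2) = 1%:M.
Proof. by rewrite /adjmx map_mx1 trmx1. Qed.

Lemma eigenvalue_det (F : fieldType) n (A : 'M[F]_n) l :
  eigenvalue A l -> \det (A - l%:M) = 0.
Proof.
move/eigenvalueP=> [v Av v_neq0]; apply/eqP/det0P; exists v => //.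
by rewrite mulmxBr Av mul_mx_scalar subrr.
Qed.

Lemma conjc_fixed (z : C) : z^* = z -> z = (complex.Re z)%:C.
Proof. by case: z => a b [] /= b0; congr (_ +i* _); lra. Qed.

Lemma herm_mx2 (H : 'M[C]_2) : herm_mx H ->
  exists (p r : R) (q : C), H = mx2 p%:C q q^* r%:C.
Proof.
rewrite /herm_mx [in adjmx H](mx2_eta H) adjmx2 [in RHS](mx2_eta H).
move=> /mx2_inj [/conjc_fixed h00 _ h10 /conjc_fixed h11].
exists (complex.Re (H 0 0)), (complex.Re (H 1 1)), (H 0 1).
by rewrite {1}(mx2_eta H) -h00 -h10 -h11.
Qed.

Lemma herm_spectrum_0_eps_entries (H : 'M[C]_2) (eps : R) :
  herm_mx H -> 0 < eps -> spectrum_0_eps H eps ->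
  exists p r q1 q2 : R, [/\ p + r = eps, p * r = q1 ^+ 2 + q2 ^+ 2 &
    H = mx2 p%:C (q1 +i* q2) (q1 -i* q2) r%:C].
Proof.
move=> hermH eps_gt0 specH.
have det0 := eigenvalue_det (proj2 (specH 0) (or_introl erefl)).
have det_eps := eigenvalue_det (proj2 (specH eps%:C) (or_intror erefl)).
have [p [r [[q1 q2] H_eq]]] := herm_mx2 hermH.
move: det0 det_eps; rewrite H_eq !scalar_mx2 !submx2 !det_mx2; simpc.
move=> [det0 _] [det_eps _]; exists p, r, q1, q2; split => //; last by nra.
have /eqP : eps * (eps - (p + r)) = 0 by nra.
by rewrite mulf_eq0 (gt_eqF eps_gt0) subr_eq0 => /eqP.
Qed.

Definition outermx (a b : C) : 'M[C]_2 :=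
  mx2 (a * a^*) (a * b^*) (b * a^*) (b * b^*).

Lemma herm_det0_outermx (p r q1 q2 : R) :
  0 < p + r -> p * r = q1 ^+ 2 + q2 ^+ 2 ->
  exists a b : C, ((a != 0) || (b != 0)) /\
    mx2 p%:C (q1 +i* q2) (q1 -i* q2) r%:C = outermx a b.
Proof.
move=> tr_gt0 det0.
have [p_gt0 | p_le0] := ltrP 0 p.
  pose s := Num.sqrt p.
  have s_gt0 : 0 < s by rewrite sqrtr_gt0.
  have ss : s * s = p by rewrite -expr2 sqr_sqrtr // ltW.
  exists (s +i* 0), ((q1 / s) -i* (q2 / s)); split.
    by rewrite eq_complex /= gt_eqF.
  have r_eq : r = (q1 ^+ 2 + q2 ^+ 2) / (s * s).
    by rewrite ss -det0; field; rewrite gt_eqF.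
  rewrite /outermx r_eq -ss; simpc.
  by congr mx2; apply/eqP; rewrite eq_complex /=; apply/andP; split;
    apply/eqP; field; rewrite gt_eqF.
have p0 : p = 0 by apply/le_anti; rewrite p_le0 /=; nra.
have [q10 q20] : q1 = 0 /\ q2 = 0 by split; nra.
have r_gt0 : 0 < r by move: tr_gt0; rewrite p0 add0r.
pose s := Num.sqrt r.
have s_gt0 : 0 < s by rewrite sqrtr_gt0.
have ss : s * s = r by rewrite -expr2 sqr_sqrtr // ltW.
exists 0, (s +i* 0); split.
  by rewrite !eq_complex /= (gt_eqF s_gt0) orbT.
rewrite /outermx p0 q10 q20 -ss; simpc.
by congr mx2; apply/eqP; rewrite eq_complex /= ?eqxx.
Qed.

Lemma mulmx_E11_adjmx (M : 'M[C]_2) :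
  M *m mx2 1 0 0 0 *m adjmx M = outermx (M 0 0) (M 1 0).
Proof.
rewrite [in LHS](mx2_eta M) adjmx2 !mulmx2 /outermx.
by congr mx2; ring.
Qed.

Lemma sl2_first_column (a b : C) : (a != 0) || (b != 0) ->
  exists M : 'M[C]_2, [/\ \det M = 1, M 0 0 = a & M 1 0 = b].
Proof.
have [-> /= b_neq0 | a_neq0 _] := eqVneq a 0.
  exists (mx2 0 (- b^-1) b 0).
  by rewrite det_mx2 !mxE mulNr mulVf // mul0r sub0r opprK.
by exists (mx2 a 0 b a^-1); rewrite det_mx2 !mxE mulfV // mul0r subr0.
Qed.

Lemma herm_spectrum_0_eps_E11 (H : 'M[C]_2) (eps : R) :
  herm_mx H -> 0 < eps -> spectrum_0_eps H eps ->
  exists M : 'M[C]_2, \det M = 1 /\ H = M *m mx2 1 0 0 0 *m adjmx M.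
Proof.
move=> hermH eps_gt0 specH.
have [p [r [q1 [q2 [tr_eq det_eq ->]]]]] :=
  herm_spectrum_0_eps_entries hermH eps_gt0 specH.
have tr_gt0 : 0 < p + r by rewrite tr_eq.
have [a [b [ab_neq0 ->]]] := herm_det0_outermx tr_gt0 det_eq.
have [M [detM M00 M10]] := sl2_first_column ab_neq0.
by exists M; rewrite mulmx_E11_adjmx M00 M10.
Qed.

End TwoByTwo.

Theorem proposition2 (R : realType) (rho1 rho2 : 'M[complex R]_2)
  (beta : R) (H1 H2 : 'M[complex R]_2) (eps1 eps2 : R) :
  thermal rho1 -> NMM rho1 -> thermal rho2 -> NMM rho2 ->
  0 < beta ->
  herm_mx H1 -> 0 < eps1 -> spectrum_0_eps H1 eps1 -> rho1 = gibbs beta H1 ->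
  herm_mx H2 -> 0 < eps2 -> spectrum_0_eps H2 eps2 -> rho2 = gibbs beta H2 ->
  exists L : 'M[complex R]_2,
    SL2 L /\ rho2 = gibbs beta (L *m H1 *m adjmx L).
Proof.
move=> _ _ _ _ _ herm1 eps1_gt0 spec1 _ herm2 eps2_gt0 spec2 ->.
have [M1 [det1 H1_eq]] := herm_spectrum_0_eps_E11 herm1 eps1_gt0 spec1.
have [M2 [det2 H2_eq]] := herm_spectrum_0_eps_E11 herm2 eps2_gt0 spec2.
have M1_unit : M1 \in unitmx by rewrite unitmxE det1 unitr1.
exists (M2 *m invmx M1); split.
  by rewrite /SL2 det_mulmx det_inv det1 det2 invr1 mulr1.
congr gibbs; rewrite H1_eq H2_eq adjmxM !mulmxA.
rewrite -(mulmxA M2 (invmx M1)) mulVmx // mulmx1.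
by rewrite -(mulmxA _ (adjmx M1)) -adjmxM mulVmx // adjmx1 mulmx1.
Qed.
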